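(* Let $K$ be a field, $V$ a vector space over $K$, and $f_L,f_R,g_L,g_R:V\to V$ linear maps. The algebra $A(f_L,f_R,g_L,g_R)$ is associative if and only if $$f_L\circ g_L=g_L\circ f_L=0,\quad f_R\circ g_R=g_R\circ f_R=0,\quad g_R\circ f_L=g_L\circ f_R,\quad f_R\circ g_L=f_L\circ g_R.$$
   Context: Let $V'$ be a second copy of $V$, identified with $V$ via a linear bijection $v\mapsto v'$. The algebra $A(f_L,f_R,g_L,g_R)$ is the vector space $Ke\oplus Ka\oplus V\oplus V'$ (with $e,a$ two new basis elements) with bilinear multiplication determined by $e^2=e$, $a^2=0$, $av=f_L(v)'$, $va=f_R(v)'$, $av'=g_L(v)$, $v'a=g_R(v)$ for $v\in V$, and all other products among $e$, $a$, elements of $V$ and elements of $V'$ equal to zero (in particular $ea=ae=0$, $ev=ve=ev'=v'e=0$, and $VV=VV'=V'V=V'V'=0$). *)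

From HB Require Import structures.
From mathcomp Require Import all_boot all_order all_algebra.
Set Implicit Arguments. Unset Strict Implicit. Unset Printing Implicit Defensive.
Import GRing.Theory.
Local Open Scope ring_scope.

(* Elements of A(f_L,f_R,g_L,g_R) = K e (+) K a (+) V (+) V':
   an element is  ce * e + ca * a + cv + (cv')'  . *)
Record Aelt (K : fieldType) (V : lmodType K) := MkA {
  ce : K; ca : K; cv : V; cv' : V }.

(* The bilinear multiplication determined by
   e^2=e, a^2=0, a v = f_L(v)', v a = f_R(v)', a v' = g_L(v), v' a = g_R(v),
   all other products of basis pieces zero. *)
Definition mulA (K : fieldType) (V : lmodType K) (fL fR gL gR : V -> V)
  (x y : Aelt V) : Aelt V :=
  MkA (ce x * ce y) 0
      (ca x *: gL (cv' y) + ca y *: gR (cv' x))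
      (ca x *: fL (cv y) + ca y *: fR (cv x)).

Definition associativeA (K : fieldType) (V : lmodType K) (fL fR gL gR : V -> V) :=
  forall x y z : Aelt V,
    mulA fL fR gL gR (mulA fL fR gL gR x y) z = mulA fL fR gL gR x (mulA fL fR gL gR y z).

From Pilot Require Import Defs.
From HB Require Import structures.
From mathcomp Require Import all_boot all_order all_algebra.
Import GRing.Theory.
Local Open Scope ring_scope.

(* A product has no a-component, so in a triple product the maps act twice,
   each time scaled by an a-coefficient: the V-component of (xy)z and of x(yz)
   is a combination of g_R f_L, g_R f_R and of g_L f_L, g_L f_R respectively,
   and dually for the V'-component.  Under the conditions the two sides agree
   term by term; conversely, the triples made of two copies of a and one
   (primed) vector isolate each condition. *)

Section TripleProducts.

Variables (K : fieldType) (V : lmodType K) (fL fR gL gR : {linear V -> V}).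

(* Qualified: MathComp exports a lemma named [mulA]. *)
Local Notation mulf := (Defs.mulA fL fR gL gR).

Lemma mulA_mulAl (x y z : Aelt V) :
  mulf (mulf x y) z =
  MkA (ce x * ce y * ce z) 0
      (ca x * ca z *: gR (fL (cv y)) + ca y * ca z *: gR (fR (cv x)))
      (ca x * ca z *: fR (gL (cv' y)) + ca y * ca z *: fR (gR (cv' x))).
Proof.
by rewrite /Defs.mulA /= !scale0r !add0r !linearD !linearZ /= !scalerA.
Qed.

Lemma mulA_mulAr (x y z : Aelt V) :
  mulf x (mulf y z) =
  MkA (ce x * (ce y * ce z)) 0
      (ca x * ca y *: gL (fL (cv z)) + ca x * ca z *: gL (fR (cv y)))
      (ca x * ca y *: fL (gL (cv' z)) + ca x * ca z *: fL (gR (cv' y))).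
Proof.
rewrite /Defs.mulA /= !scale0r !addr0 !linearD !linearZ /= !scalerA.
by rewrite [ca y * _]mulrC [ca z * _]mulrC.
Qed.

End TripleProducts.

Theorem mainTheorem3 (K : fieldType) (V : lmodType K)
  (fL fR gL gR : {linear V -> V}) :
  associativeA fL fR gL gR <->
  [/\ (forall v, fL (gL v) = 0) /\ (forall v, gL (fL v) = 0),
      (forall v, fR (gR v) = 0) /\ (forall v, gR (fR v) = 0),
      (forall v, gR (fL v) = gL (fR v))
    & (forall v, fR (gL v) = fL (gR v))].
Proof.
split=> [assoc|]; last first.
  case=> [[fLgL gLfL] [fRgR gRfR] gRfL fRgL] x y z.
  rewrite mulA_mulAl mulA_mulAr mulrA gRfL fRgL gRfR fRgR gLfL fLgL.
  by rewrite !scaler0 !addr0 !add0r.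
pose a := MkA (0 : K) 1 (0 : V) 0.
pose vec (v : V) := MkA (0 : K) 0 v 0.
pose vec' (v : V) := MkA (0 : K) 0 0 v.
have compV x y z := congr1 (@cv _ _) (assoc x y z).
have compV' x y z := congr1 (@cv' _ _) (assoc x y z).
split; [split|split| |] => v;
  [ have := compV' a a (vec' v) | have := compV a a (vec v)
  | have := compV' (vec' v) a a | have := compV (vec v) a a
  | have := compV a (vec v) a   | have := compV' a (vec' v) a ];
  by rewrite mulA_mulAl mulA_mulAr /=
    ?(linear0, mulr0, mul0r, mulr1, scale0r, scale1r, addr0, add0r) => ->.
Qed.
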